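(* Let $c=\sqrt[3]{5589+891\sqrt{33}}/8=2.7551046130\ldots$ There is an absolute constant $C>0$ such that for every $n\ge1$ and every $A\subseteq\mathbb{F}_3^n$ for which the equation $a+b+c'=0$ with $a,b,c'\in A$ has no solutions except $a=b=c'$, one has $|A|\le C\,c^n$.
   Context: $\mathbb{F}_3$ is the field of integers modulo $3$. *)

From HB Require Import structures.
From mathcomp Require Import all_boot all_algebra.

Definition no_nontrivial_3sum (n : nat) (A : {set 'rV['F_3]_n}) : Prop :=
  forall a b c', a \in A -> b \in A -> c' \in A ->
    (a + b + c' = 0)%R -> a = b /\ b = c'.

Arguments no_nontrivial_3sum {n} A.

From Stdlib Require Import Reals.

Definition cconst : R :=
  (Rpower (5589 + 891 * sqrt 33) (1 / 3) / 8)%R.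

(* Tao's slice-rank form of the Croot-Lev-Pach / Ellenberg-Gijswijt polynomial method.
   If A is a cap set, then (x, y, z) |-> [x + y + z = 0] on A^3 is the diagonal tensor,
   whose slice rank is |A|.  Over F_3 this indicator is prod_i (1 - (x_i + y_i + z_i)^2),
   a sum of monomials of total degree at most 2n with every exponent at most 2; in each
   monomial the x-, y- or z-part has degree at most 2n/3, and grouping by that part shows
   that the slice rank is at most 3 M_n, where M_n counts the exponent vectors in
   {0,1,2}^n of weight at most 2n/3.  Finally M_n u^(2n) <= (1 + u^3 + u^6)^n for
   0 < u <= 1, and u^3 = (sqrt 33 - 1)/8 makes (1 + u^3 + u^6)/u^2 equal to c. *)

From HB Require Import structures.
From mathcomp Require Import all_boot all_order all_algebra.
From mathcomp Require Import zify ring.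

Set Implicit Arguments.
Unset Strict Implicit.
Unset Printing Implicit Defensive.

Section SliceRank.
Import GRing.Theory.
Local Open Scope ring_scope.

Variable F : fieldType.

Lemma kernel_vector_ones r m (f : 'M[F]_(r, m)) :
  exists d (s : 'I_d -> 'I_m) (v : 'rV[F]_m),
    [/\ (m - r <= d)%N, injective s, v *m f^T = 0 & forall k, v 0 (s k) = 1].
Proof.
set B := row_base (kermx f^T).
have fullB : row_full B^T by rewrite /row_full mxrank_tr eq_row_base.
pose s := fullrankfun fullB.
pose M := (rowsub s B^T)^T.
have unitM : M \in unitmx by rewrite unitmx_tr; apply: fullrowsub_unit.
pose one : 'rV[F]_(\rank (kermx f^T)) := const_mx 1.
pose v := one *m invmx M *m B.
exists (\rank (kermx f^T)), s, v; split.
- by rewrite mxrank_ker; have := rank_leq_col f^T; lia.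
- exact: fullrankfun_inj.
- by apply/sub_kermxP; rewrite (submx_trans (submxMl _ B)) ?eq_row_base.
- move=> k; have -> : v 0 (s k) = (one *m invmx M *m M) 0 k.
    by rewrite !mxE; apply: eq_bigr => l _; rewrite !mxE.
  by rewrite mulmxKV // mxE.
Qed.

Lemma mx1_eq_addM_dim_le d r1 r2 (P1 : 'M[F]_(d, r1)) Q1 (P2 : 'M_(d, r2)) Q2 :
  1%:M = P1 *m Q1 + P2 *m Q2 -> (d <= r1 + r2)%N.
Proof.
move=> mx1E; rewrite -{1}(mxrank1 F d) mx1E.
apply: leq_trans (mxrank_add _ _) (leq_add _ _);
  exact: leq_trans (mxrankM_maxl _ _) (rank_leq_col _).
Qed.

Lemma sum_mul_diag m (v : 'I_m -> F) (y z : 'I_m) :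
  \sum_x v x * ((x == y) && (y == z))%:R = v y * (y == z)%:R.
Proof.
rewrite (bigD1 y) //= eqxx big1 ?addr0 // => x /negPf ->; exact: mulr0.
Qed.

(* Contract the first variable against a vector v killing every f1-slice: on the at least
   m - r1 coordinates where v = 1 this leaves an identity matrix factored through r2 + r3
   dimensions. *)
Lemma slice_rank_diagonal_mx m r1 r2 r3
    (f1 : 'M[F]_(r1, m)) (f2 : 'M[F]_(r2, m)) (f3 : 'M[F]_(r3, m))
    (F1 : 'I_r1 -> 'I_m -> 'I_m -> F) (F2 : 'I_r2 -> 'I_m -> 'I_m -> F)
    (F3 : 'I_r3 -> 'I_m -> 'I_m -> F) :
  (forall x y z, ((x == y) && (y == z))%:R =
     \sum_i f1 i x * F1 i y z + \sum_i f2 i y * F2 i x z + \sum_i f3 i z * F3 i x y) ->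
  (m <= r1 + r2 + r3)%N.
Proof.
move=> diagE.
have [d [s [v [d_ge s_inj vf1 v1]]]] := kernel_vector_ones f1.
have vf1_0 i : \sum_x v 0 x * f1 i x = 0.
  have := congr1 (fun u : 'rV_r1 => u 0 i) vf1; rewrite !mxE => vf1i; rewrite -[RHS]vf1i.
  by apply: eq_bigr => x _; rewrite !mxE.
have vdiagE y z : v 0 y * (y == z)%:R =
    \sum_j f2 j y * (\sum_x v 0 x * F2 j x z) + \sum_k (\sum_x v 0 x * F3 k x y) * f3 k z.
  rewrite -sum_mul_diag; under eq_bigr do rewrite diagE !mulrDr.
  rewrite !big_split /=.
  have -> : \sum_x v 0 x * (\sum_i f1 i x * F1 i y z) = 0.
    under eq_bigr do rewrite big_distrr /=.
    rewrite exchange_big big1 //= => i _.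
    under eq_bigr do rewrite mulrA.
    by rewrite -big_distrl /= vf1_0 mul0r.
  rewrite add0r; congr (_ + _);
    under eq_bigr do rewrite big_distrr /=;
    rewrite exchange_big /=; apply: eq_bigr => j _.
  - by rewrite big_distrr /=; apply: eq_bigr => x _; ring.
  - by rewrite big_distrl /=; apply: eq_bigr => x _; ring.
suff : (d <= r2 + r3)%N by lia.
apply: (@mx1_eq_addM_dim_le _ _ _
  (\matrix_(k, j) f2 j (s k)) (\matrix_(j, l) \sum_x v 0 x * F2 j x (s l))
  (\matrix_(k, j) \sum_x v 0 x * F3 j x (s k)) (\matrix_(j, l) f3 j (s l))).
apply/matrixP => k l; rewrite !mxE.
have -> : (k == l) = (s k == s l) by rewrite (inj_eq s_inj).
rewrite -[LHS]mul1r -{1}(v1 k) vdiagE.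
by congr (_ + _); apply: eq_bigr => j _; rewrite !mxE.
Qed.

Lemma slice_rank_diagonal (T I1 I2 I3 : finType)
    (P1 : {pred I1}) (P2 : {pred I2}) (P3 : {pred I3})
    (f1 : I1 -> T -> F) (f2 : I2 -> T -> F) (f3 : I3 -> T -> F)
    (F1 : I1 -> T -> T -> F) (F2 : I2 -> T -> T -> F) (F3 : I3 -> T -> T -> F) :
  (forall x y z, ((x == y) && (y == z))%:R =
     \sum_(i in P1) f1 i x * F1 i y z + \sum_(i in P2) f2 i y * F2 i x z +
     \sum_(i in P3) f3 i z * F3 i x y) ->
  (#|T| <= #|P1| + #|P2| + #|P3|)%N.
Proof.
move=> diagE; pose e : 'I_#|T| -> T := enum_val.
apply: (@slice_rank_diagonal_mx _ _ _ _
  (\matrix_(i, x) f1 (enum_val i) (e x)) (\matrix_(i, x) f2 (enum_val i) (e x))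
  (\matrix_(i, x) f3 (enum_val i) (e x))
  (fun i y z => F1 (enum_val i) (e y) (e z)) (fun i x z => F2 (enum_val i) (e x) (e z))
  (fun i x y => F3 (enum_val i) (e x) (e y))) => x y z.
have e_inj : injective e := enum_val_inj.
rewrite -(inj_eq e_inj x y) -(inj_eq e_inj y z) diagE.
rewrite (big_enum_val (A := P1)) (big_enum_val (A := P2)) (big_enum_val (A := P3)).
by congr (_ + _ + _); apply: eq_bigr => i _; rewrite mxE.
Qed.

Lemma sum_group_by (Phi M : finType) (C : pred Phi) (p : Phi -> M) (Q : {pred M})
    (u : M -> F) (w : Phi -> F) :
  (forall phi, C phi -> p phi \in Q) ->
  \sum_(phi | C phi) u (p phi) * w phi =
  \sum_(a in Q) u a * \sum_(phi | C phi && (p phi == a)) w phi.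
Proof.
move=> CQ; rewrite (partition_big p (mem Q)) //=; apply: eq_bigr => a _.
by rewrite big_distrr; apply: eq_bigr => phi /andP[_ /eqP->].
Qed.

Lemma sum_regroup_slices (T Phi M : finType) (Q : {pred M}) (p q r : Phi -> M)
    (k : Phi -> F) (X : T -> M -> F) :
  (forall phi, [|| p phi \in Q, q phi \in Q | r phi \in Q]) ->
  exists F1 F2 F3 : M -> T -> T -> F, forall x y z,
    \sum_phi k phi * X x (p phi) * X y (q phi) * X z (r phi) =
    \sum_(a in Q) X x a * F1 a y z + \sum_(a in Q) X y a * F2 a x z +
    \sum_(a in Q) X z a * F3 a x y.
Proof.
move=> cover.
pose C1 phi := p phi \in Q.
pose C2 phi := (p phi \notin Q) && (q phi \in Q).
pose C3 phi := (p phi \notin Q) && (q phi \notin Q).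
exists (fun a y z => \sum_(phi | C1 phi && (p phi == a)) k phi * X y (q phi) * X z (r phi)),
  (fun a x z => \sum_(phi | C2 phi && (q phi == a)) k phi * X x (p phi) * X z (r phi)),
  (fun a x y => \sum_(phi | C3 phi && (r phi == a)) k phi * X x (p phi) * X y (q phi)).
move=> x y z; rewrite (bigID C1) [X in _ + X = _](bigID (fun phi => q phi \in Q)) addrA /=.
congr (_ + _ + _).
- rewrite -(@sum_group_by _ _ C1 p Q (X x)) //.
  by apply: eq_bigr => phi _; ring.
- rewrite -(@sum_group_by _ _ C2 q Q (X y)) => [|phi /andP[] //].
  by apply: eq_bigr => phi _; ring.
- rewrite -(@sum_group_by _ _ C3 r Q (X z)) => [|phi /andP[/negPf pQ /negPf qQ]].
    by apply: eq_bigr => phi _; ring.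
  by have := cover phi; rewrite pQ qQ.
Qed.

End SliceRank.

Section CapSet.
Import Order.TTheory GRing.Theory Num.Theory.
Local Open Scope ring_scope.

Lemma rV_eq0_indicator (R : comPzRingType) n (v : 'rV[R]_n) :
  (v == 0)%:R = \prod_i (v 0 i == 0)%:R :> R.
Proof.
have [->|v_ne0] := eqVneq v 0; first by rewrite big1 // => i _; rewrite mxE eqxx.
have [i vi_ne0] : exists i, v 0 i != 0.
  apply/existsP; apply: contraR v_ne0 => /existsPn vi_eq0.
  by apply/eqP/rowP => i; rewrite mxE; apply/eqP/negbNE/vi_eq0.
by rewrite (bigD1 i) //= (negPf vi_ne0) mul0r.
Qed.

(* The seven monomials of 1 - (a + b + c)^2 = 1 - a^2 - b^2 - c^2 + ab + bc + ca over F_3. *)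
Definition mon_coef (t : 'I_7) : 'F_3 := nth 0 [:: 1; -1; -1; -1; 1; 1; 1] t.
Definition mon_deg_x (t : 'I_7) : nat := nth 0 [:: 0; 2; 0; 0; 1; 0; 1] t.
Definition mon_deg_y (t : 'I_7) : nat := nth 0 [:: 0; 0; 2; 0; 1; 1; 0] t.
Definition mon_deg_z (t : 'I_7) : nat := nth 0 [:: 0; 0; 0; 2; 0; 1; 1] t.

Lemma mon_deg_le2 t : (mon_deg_x t + mon_deg_y t + mon_deg_z t <= 2)%N.
Proof. by case: t => [[|[|[|[|[|[|[|?]]]]]]] ?]. Qed.

Lemma F3_sum_eq0_indicator (a b c : 'F_3) :
  (a + b + c == 0)%:R =
  \sum_(t < 7) mon_coef t * a ^+ mon_deg_x t * b ^+ mon_deg_y t * c ^+ mon_deg_z t.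
Proof.
rewrite !big_ord_recl big_ord0.
by case: a => [[|[|[|//]]] ?]; case: b => [[|[|[|//]]] ?]; case: c => [[|[|[|//]]] ?];
  apply/eqP; vm_compute.
Qed.

Definition weight n (a : {ffun 'I_n -> 'I_3}) : nat := (\sum_i (a i : nat))%N.

Definition low_weight n : {set {ffun 'I_n -> 'I_3}} :=
  [set a | (3 * weight a <= 2 * n)%N].

Definition monomial n (x : 'rV['F_3]_n) (a : {ffun 'I_n -> 'I_3}) : 'F_3 :=
  \prod_i x 0 i ^+ a i.

Definition exps_of (d : 'I_7 -> nat) n (phi : {ffun 'I_n -> 'I_7}) : {ffun 'I_n -> 'I_3} :=
  [ffun i => inord (d (phi i))].

Lemma exps_ofE d n (phi : {ffun 'I_n -> 'I_7}) i :
  (forall t, d t <= 2)%N -> exps_of d phi i = d (phi i) :> nat.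
Proof. by move=> d_le2; rewrite ffunE inordK // ltnS. Qed.

Lemma monomial_exps_of n (x : 'rV_n) d phi :
  (forall t, d t <= 2)%N -> monomial x (exps_of d phi) = \prod_i x 0 i ^+ d (phi i).
Proof. by move=> d_le2; apply: eq_bigr => i _; rewrite exps_ofE. Qed.

Lemma rV_F3_sum_eq0_indicator n (x y z : 'rV['F_3]_n) :
  (x + y + z == 0)%:R =
  \sum_(phi : {ffun 'I_n -> 'I_7}) (\prod_i mon_coef (phi i)) *
    monomial x (exps_of mon_deg_x phi) * monomial y (exps_of mon_deg_y phi) *
    monomial z (exps_of mon_deg_z phi).
Proof.
rewrite rV_eq0_indicator; under eq_bigr do rewrite !mxE F3_sum_eq0_indicator.
rewrite bigA_distr_bigA; apply: eq_bigr => phi _.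
by rewrite !monomial_exps_of -?big_split // => t; have := mon_deg_le2 t; lia.
Qed.

Lemma weight_exps_of d n (phi : {ffun 'I_n -> 'I_7}) :
  (forall t, d t <= 2)%N -> weight (exps_of d phi) = (\sum_i d (phi i))%N.
Proof. by move=> d_le2; apply: eq_bigr => i _; rewrite exps_ofE. Qed.

Lemma low_weight_cover n (phi : {ffun 'I_n -> 'I_7}) :
  [|| exps_of mon_deg_x phi \in low_weight n, exps_of mon_deg_y phi \in low_weight n
    | exps_of mon_deg_z phi \in low_weight n].
Proof.
rewrite !inE !weight_exps_of => [|t|t|t]; try by have := mon_deg_le2 t; lia.
have : (\sum_i mon_deg_x (phi i) + \sum_i mon_deg_y (phi i) + \sum_i mon_deg_z (phi i)
          <= \sum_(i < n) 2)%N.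
  by rewrite -!big_split; apply: leq_sum => i _; apply: mon_deg_le2.
rewrite sum_nat_const card_ord; lia.
Qed.

Lemma rV_F3_add3 n (a : 'rV['F_3]_n) : a + a + a = 0.
Proof.
by apply/rowP => i; rewrite !mxE; case: (a 0 i) => [[|[|[|//]]] ?]; apply/eqP; vm_compute.
Qed.

Lemma card_cap_set_le n (A : {set 'rV['F_3]_n}) :
  no_nontrivial_3sum A -> (#|A| <= 3 * #|low_weight n|)%N.
Proof.
move=> capA.
have [F1 [F2 [F3 sliceE]]] := sum_regroup_slices (T := {x | x \in A})
  (fun phi : {ffun 'I_n -> 'I_7} => \prod_i mon_coef (phi i))
  (fun x a => monomial (val x) a) (@low_weight_cover n).
suff : (#|{: {x | x \in A}}| <= #|low_weight n| + #|low_weight n| + #|low_weight n|)%N.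
  by rewrite card_sig (eq_card (B := A)) //; lia.
apply: (@slice_rank_diagonal 'F_3) => x y z.
have -> : (x == y) && (y == z) = (val x + val y + val z == 0).
  apply/idP/eqP => [/andP[/eqP-> /eqP->]|]; first exact: rV_F3_add3.
  by move/(capA _ _ _ (valP x) (valP y) (valP z)) => [/val_inj-> /val_inj->]; rewrite !eqxx.
by rewrite rV_F3_sum_eq0_indicator sliceE.
Qed.

Lemma card_low_weight_le (R : realDomainType) n (u : R) :
  0 <= u <= 1 -> #|low_weight n|%:R * u ^+ (2 * n) <= (1 + u ^+ 3 + u ^+ 6) ^+ n.
Proof.
case/andP=> u_ge0 u_le1.
have sumE : \sum_(a : {ffun 'I_n -> 'I_3}) (u ^+ 3) ^+ weight a = (1 + u ^+ 3 + u ^+ 6) ^+ n.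
  have geomE : \sum_(j < 3) (u ^+ 3) ^+ j = 1 + u ^+ 3 + u ^+ 6.
    by rewrite !big_ord_recr big_ord0 /= add0r expr0 expr1 -exprM.
  under eq_bigr => a _ do rewrite /weight -prodrXr.
  by rewrite -geomE -[in RHS](card_ord n) -prodr_const bigA_distr_bigA.
rewrite -sumE mulr_natl -sumr_const.
apply: le_trans (_ : \sum_(a in low_weight n) (u ^+ 3) ^+ weight a <= _).
  by apply: ler_sum => a; rewrite inE -exprM => a_low; apply: ler_wiXn2l.
by rewrite [leRHS](bigID (mem (low_weight n))) /= lerDl sumr_ge0 // => a _;
  rewrite !exprn_ge0.
Qed.

End CapSet.

From Stdlib Require Import Reals Lra.
From mathcomp Require Import Rstruct.

Section CubeRoot.
Local Open Scope R_scope.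

Lemma Rpower_third_cube x : 0 < x -> Rpower x (1 / 3) ^ 3 = x.
Proof.
move=> x_gt0; rewrite -Rpower_pow ?Rpower_mult; last by apply: exp_pos.
have -> : 1 / 3 * INR 3 = 1 by rewrite /=; field.
exact: Rpower_1.
Qed.

Lemma pow3_le_cancel a b : 0 < b -> a ^ 3 <= b ^ 3 -> a <= b.
Proof.
move=> b_gt0 ab3; have [//|ba] := Rle_lt_dec a b.
have : 0 < (a - b) * (a ^ 2 + a * b + b ^ 2) by apply: Rmult_lt_0_compat; nra.
nra.
Qed.

(* u ^ 3 = (sqrt 33 - 1) / 8 minimises (1 + x + x ^ 2) / x ^ (2/3) on (0, 1], and the
   minimum is exactly cconst. *)
Lemma cconst_witness : exists u, 0 < u <= 1 /\ (1 + u ^ 3 + u ^ 6) / u ^ 2 <= cconst.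
Proof.
set s := sqrt 33; set x := (s - 1) / 8; set u := Rpower x (1 / 3).
have s2 : s ^ 2 = 33 by rewrite /s pow2_sqrt //; lra.
have s_bounds : 5 < s < 6 by have := sqrt_pos 33; rewrite -/s; nra.
have x_bounds : 0 < x < 1 by rewrite /x; lra.
have u_gt0 : 0 < u by apply: exp_pos.
have u3 : u ^ 3 = x by apply: Rpower_third_cube; lra.
have u_le1 : u <= 1 by apply: pow3_le_cancel; [lra | rewrite u3 pow1; lra].
exists u; split; first lra.
set K := 5589 + 891 * s.
have cube_eq : 512 * (1 + x + x ^ 2) ^ 3 = K * x ^ 2.
  have E : 512 * (1 + x + x ^ 2) ^ 3 - K * x ^ 2 = (s ^ 2 - 33) *
      (-4257/512 - 2133/256 * s + 39/64 * s ^ 2 + 9/256 * s ^ 3 + 1/512 * s ^ 4).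
    by rewrite /x /K; field.
  by rewrite s2 in E; lra.
have cconst3 : cconst ^ 3 = K / 512.
  have w3 : Rpower K (1 / 3) ^ 3 = K by apply: Rpower_third_cube; rewrite /K; lra.
  by rewrite /cconst -/s -/K -{2}w3; field.
have lhs3 : ((1 + u ^ 3 + u ^ 6) / u ^ 2) ^ 3 = (1 + x + x ^ 2) ^ 3 / x ^ 2.
  by rewrite -u3; field; lra.
apply: pow3_le_cancel; first by apply: Rdiv_lt_0_compat; [apply: exp_pos | lra].
rewrite lhs3 cconst3; apply: Req_le.
have -> : K = 512 * (1 + x + x ^ 2) ^ 3 / x ^ 2 by rewrite cube_eq; field; lra.
by field; lra.
Qed.

Lemma card_low_weight_le_cconst n : INR #|low_weight n| <= cconst ^ n.
Proof.
have [u [[u_gt0 u_le1] u_cconst]] := cconst_witness.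
have count : INR #|low_weight n| * (u ^ 2) ^ n <= (1 + u ^ 3 + u ^ 6) ^ n.
  rewrite -pow_mult; apply/RleP; rewrite INRE !RpowE; apply: card_low_weight_le.
  by apply/andP; split; apply/RleP; [exact: Rlt_le | exact: u_le1].
have u2_gt0 : 0 < u ^ 2 by apply: pow_lt.
have sum_gt0 : 0 < 1 + u ^ 3 + u ^ 6.
  by have := pow_lt u 3 u_gt0; have := pow_lt u 6 u_gt0; lra.
apply: (Rmult_le_reg_r ((u ^ 2) ^ n)); first exact: pow_lt.
apply: (Rle_trans _ _ _ count).
have -> : (1 + u ^ 3 + u ^ 6) ^ n = ((1 + u ^ 3 + u ^ 6) / u ^ 2) ^ n * (u ^ 2) ^ n.
  by rewrite -Rpow_mult_distr; f_equal; field; lra.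
apply: Rmult_le_compat_r; first exact/Rlt_le/pow_lt.
by apply: pow_incr; split; first exact/Rlt_le/Rdiv_lt_0_compat.
Qed.

End CubeRoot.

Theorem mainTheorem8 :
  exists C : R, (0 < C)%R /\
    forall (n : nat), (1 <= n)%N ->
    forall A : {set 'rV['F_3]_n}, no_nontrivial_3sum A ->
      (INR #|A| <= C * cconst ^ n)%R.
Proof.
exists 3%R; split => [|n _ A capA]; first lra.
apply: (Rle_trans _ (INR (3 * #|low_weight n|))).
  exact/le_INR/leP/card_cap_set_le.
rewrite mult_INR (_ : INR 3 = 3%R); last by rewrite /=; lra.
by apply: Rmult_le_compat_l; [lra | exact: card_low_weight_le_cconst].
Qed.
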